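(* Let $A, B \in \mathbb{R}^{n\times n}$ be symmetric, isospectral, and both friendly. Then there is at most one doubly stochastic matrix $X \in \mathcal{D}(n)$ with $\|XA - BX\|_F^2 = 0$ (equivalently, with $XA = BX$).
   Context: A real symmetric matrix $A$ is called friendly if all of its eigenvalues are distinct (each has multiplicity one) and each unit eigenvector $u$ satisfies $\langle u, \mathbb{1}_n\rangle \ne 0$, where $\mathbb{1}_n$ is the all-ones vector. $A$ and $B$ are isospectral if they have the same distinct eigenvalues with the same multiplicities. $\mathcal{D}(n)$ is the set of doubly stochastic $n\times n$ matrices (entrywise nonnegative with all row and column sums equal to 1). $\|\cdot\|_F$ is the Frobenius norm. *)

From HB Require Import structures.
From mathcomp Require Import all_boot all_order all_algebra.
From mathcomp Require Import reals.
Set Implicit Arguments. Unset Strict Implicit. Unset Printing Implicit Defensive.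
Import Order.TTheory GRing.Theory Num.Theory.
Local Open Scope ring_scope.

Section Defs.
Variable R : realType.

Definition eig_mult n (A : 'M[R]_n) (a : R) : nat := mup a (char_poly A).

Definition ones n : 'cV[R]_n := const_mx 1.

Definition inner n (u v : 'cV[R]_n) : R := \sum_(i < n) u i 0 * v i 0.

Definition sym_mx n (A : 'M[R]_n) : Prop := A^T = A.

Definition friendly n (A : 'M[R]_n) : Prop :=
  sym_mx A /\
  (forall a : R, root (char_poly A) a -> eig_mult A a = 1%N) /\
  (forall (a : R) (u : 'cV[R]_n), A *m u = a *: u -> inner u u = 1 ->
      inner u (ones n) != 0).

Definition isospectral n (A B : 'M[R]_n) : Prop :=
  forall a : R, eig_mult A a = eig_mult B a.

Definition doubly_stochastic n (X : 'M[R]_n) : Prop :=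
  (forall i j, 0 <= X i j) /\
  (forall i, \sum_(j < n) X i j = 1) /\
  (forall j, \sum_(i < n) X i j = 1).

Definition frob2 m n (M : 'M[R]_(m, n)) : R := \sum_(i < m) \sum_(j < n) M i j ^+ 2.

End Defs.

From HB Require Import structures.
From mathcomp Require Import all_boot all_order all_algebra.
From mathcomp Require Import reals complex.
Set Implicit Arguments. Unset Strict Implicit. Unset Printing Implicit Defensive.
Import Order.TTheory GRing.Theory Num.Theory Num.Def.
Local Open Scope ring_scope.

(* If X and Y both intertwine A and B, then so does Z := X - Y, and Z 1 = 0
   because X and Y have unit row sums.  For symmetric A and B the Gram matrix
   W := Z^T Z then commutes with A and satisfies 1^T W = 0.  A real symmetric
   matrix has real eigenvalues, so its characteristic polynomial splits over
   R, and by Cayley-Hamilton W is annihilated by a product of factors A - a.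
   Peeling these off one at a time, each stage leaves a matrix whose columns
   are eigenvectors of A orthogonal to 1, hence zero by friendliness of A.
   So W = 0, whence Z = 0. *)

Lemma hermitian_eigenvalue_real (C : numClosedFieldType) n (A : 'M[C]_n) z :
  A^T = map_mx conjC A -> eigenvalue A z -> z \is Num.real.
Proof.
move=> hermA /eigenvalueP [v vA v_neq0].
set w := (map_mx conjC v)^T.
have Aw : A *m w = z^* *: w.
  by rewrite /w -[A]trmxK -trmx_mul hermA -map_mxM vA map_mxZ linearZ.
have vw_neq0 : (v *m w) 0 0 != 0.
  apply: contra v_neq0; rewrite mxE => /eqP vw0; apply/eqP/rowP => i.
  have vv_ge0 j : 0 <= v 0 j * w j 0 by rewrite !mxE mul_conjC_ge0.
  have /eqP := psumr_eq0P (fun j _ => vv_ge0 j) vw0 (i := i) isT.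
  by rewrite !mxE mul_conjC_eq0 => /eqP->.
(* Evaluating v A w in two ways gives z s = z^* s, with s = sum |v_i|^2. *)
rewrite CrealE; apply/eqP/(mulIf vw_neq0).
have /matrixP/(_ 0 0) := mulmxA v A w.
by rewrite vA Aw -scalemxAl -scalemxAr !mxE.
Qed.

Lemma sym_char_poly_split (R : rcfType) n (A : 'M[R]_n) :
  A^T = A -> exists s : seq R, char_poly A = \prod_(a <- s) ('X - a%:P).
Proof.
move=> symA.
have [r] := closed_field_poly_normal (map_poly (real_complex R) (char_poly A)).
rewrite lead_coef_map (monicP (char_poly_monic A)) rmorph1 scale1r => charAE.
have r_real z : z \in r -> z \is Num.real.
  move=> zr; apply: (@hermitian_eigenvalue_real _ _ (map_mx (real_complex R) A)).
    rewrite map_trmx symA -map_mx_comp; apply: eq_map_mx => x /=.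
    by rewrite conj_Creal // complex_real.
  by rewrite eigenvalue_root_char -map_char_poly charAE root_prod_XsubC.
exists (map (@complex.Re R) r); apply: (map_inj_poly (@complexI R)) => //.
rewrite charAE rmorph_prod big_map; apply: eq_big_seq => z zr.
by rewrite /= map_polyXsubC /= RRe_real ?r_real.
Qed.

Lemma sum_sqr_eq0 (R : realDomainType) (I : finType) (F : I -> R) :
  \sum_i F i ^+ 2 = 0 -> forall i, F i = 0.
Proof.
move=> F0 i; apply/eqP; rewrite -sqrf_eq0.
by rewrite (psumr_eq0P (fun j _ => sqr_ge0 (F j)) F0 (i := i)).
Qed.

Lemma gram_mx_eq0 (R : realDomainType) m n (Z : 'M[R]_(m, n)) :
  Z^T *m Z = 0 -> Z = 0.
Proof.
move=> ZZ0; apply/matrixP => i j; rewrite mxE.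
apply: (sum_sqr_eq0 (F := Z^~ j)).
have := congr1 (fun M : 'M_n => M j j) ZZ0; rewrite !mxE => ZZj; rewrite -[RHS]ZZj.
by apply: eq_bigr => k _; rewrite mxE expr2.
Qed.

Lemma gram_mx_commute (R : comNzRingType) m n (A : 'M[R]_n) (B : 'M[R]_m)
    (Z : 'M[R]_(m, n)) :
  A^T = A -> B^T = B -> Z *m A = B *m Z -> A *m (Z^T *m Z) = Z^T *m Z *m A.
Proof.
move=> symA symB ZA.
have AZt : A *m Z^T = Z^T *m B by rewrite -{1}symA -trmx_mul ZA trmx_mul symB.
by rewrite mulmxA AZt -!mulmxA ZA.
Qed.

Section RealFacts.
Variable R : realType.

Lemma frob2_eq0 m n (M : 'M[R]_(m, n)) : frob2 M = 0 -> M = 0.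
Proof.
rewrite /frob2 pair_bigA /= => /sum_sqr_eq0 M0.
by apply/matrixP => i j; rewrite mxE (M0 (i, j)).
Qed.

Lemma row_sum1_mul_ones n (X : 'M[R]_n) :
  (forall i, \sum_j X i j = 1) -> X *m ones R n = ones R n.
Proof.
move=> Xrow; apply/colP => i; rewrite !mxE -(Xrow i).
by apply: eq_bigr => j _; rewrite mxE mulr1.
Qed.

Lemma inner_self_eq0 n (u : 'cV[R]_n) : inner u u = 0 -> u = 0.
Proof.
rewrite /inner; under eq_bigr do rewrite -expr2.
by move=> /sum_sqr_eq0 u0; apply/colP => i; rewrite mxE u0.
Qed.

Lemma inner_self_ge0 n (u : 'cV[R]_n) : 0 <= inner u u.
Proof. by apply: sumr_ge0 => i _; rewrite -expr2 sqr_ge0. Qed.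

Lemma innerZl n c (u v : 'cV[R]_n) : inner (c *: u) v = c * inner u v.
Proof. by rewrite /inner mulr_sumr; apply: eq_bigr => i _; rewrite mxE mulrA. Qed.

Lemma innerZr n c (u v : 'cV[R]_n) : inner u (c *: v) = c * inner u v.
Proof. by rewrite /inner mulr_sumr; apply: eq_bigr => i _; rewrite mxE mulrCA. Qed.

Lemma innerE n (u v : 'cV[R]_n) : inner u v = (v^T *m u) 0 0.
Proof. by rewrite mxE; apply: eq_bigr => i _; rewrite mxE mulrC. Qed.

End RealFacts.

Section OnesNonorthogonalEigenvectors.
Variables (R : realType) (n' : nat) (A : 'M[R]_n'.+1).
Local Notation n := n'.+1.
Hypothesis eigvec_ones_neq0 : forall (a : R) (u : 'cV[R]_n),
  A *m u = a *: u -> inner u u = 1 -> inner u (ones R n) != 0.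

Lemma eigenvector_ones_orth_eq0 a u :
  A *m u = a *: u -> inner u (ones R n) = 0 -> u = 0.
Proof.
move=> Au u1; have [// | u_neq0] := eqVneq u 0.
have uu_gt0 : 0 < inner u u.
  rewrite lt_def inner_self_ge0 andbT.
  by apply: contra u_neq0 => /eqP/inner_self_eq0->.
set c := Num.sqrt (inner u u).
have c_neq0 : c != 0 by rewrite gt_eqF ?sqrtr_gt0.
suff : inner (c^-1 *: u) (ones R n) != 0 by rewrite innerZl u1 mulr0 eqxx.
apply: (eigvec_ones_neq0 (a := a)); first by rewrite -scalemxAr Au !scalerA mulrC.
rewrite innerZl innerZr mulrA -expr2 exprVn sqr_sqrtr ?inner_self_ge0 //.
by rewrite mulVf ?gt_eqF.
Qed.

Lemma eigenmx_ones_orth_eq0 a (M : 'M[R]_n) :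
  A *m M = a *: M -> (ones R n)^T *m M = 0 -> M = 0.
Proof.
move=> AM oneM; apply/matrixP => i j; rewrite mxE.
suff /colP/(_ i) : col j M = 0 by rewrite !mxE.
apply: (eigenvector_ones_orth_eq0 (a := a)); first by rewrite !colE mulmxA AM scalemxAl.
by rewrite innerE colE mulmxA oneM mul0mx mxE.
Qed.

Lemma split_annihilator_ones_orth_eq0 (s : seq R) (M : 'M[R]_n) :
  A *m M = M *m A -> (ones R n)^T *m M = 0 ->
  horner_mx A (\prod_(a <- s) ('X - a%:P)) *m M = 0 -> M = 0.
Proof.
elim: s M => [|a s IHs] M AM oneM; first by rewrite big_nil rmorph1 mul1mx.
rewrite big_cons mulrC rmorphM rmorphB /= horner_mx_X horner_mx_C -mulmxE -mulmxA.
move=> pM0; have AAa : A *m (A - a%:M) = (A - a%:M) *m A.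
  by rewrite mulmxBr mulmxBl mul_mx_scalar mul_scalar_mx.
have AaM0 : (A - a%:M) *m M = 0.
  apply: IHs pM0; first by rewrite mulmxA AAa -!mulmxA AM.
  by rewrite mulmxBl mul_scalar_mx mulmxBr -scalemxAr AM mulmxA oneM mul0mx scaler0 subr0.
apply: (eigenmx_ones_orth_eq0 (a := a)) oneM.
by apply/eqP; rewrite -subr_eq0 -mul_scalar_mx -mulmxBl AaM0.
Qed.

End OnesNonorthogonalEigenvectors.

Lemma sym_commute_ones_orth_eq0 (R : realType) n (A M : 'M[R]_n) :
  A^T = A ->
  (forall a u, A *m u = a *: u -> inner u u = 1 -> inner u (ones R n) != 0) ->
  A *m M = M *m A -> (ones R n)^T *m M = 0 -> M = 0.
Proof.
case: n A M => [|n'] A M symA eigA AM oneM; first exact: flatmx0.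
have [s charAE] := sym_char_poly_split symA.
apply: (split_annihilator_ones_orth_eq0 eigA (s := s) AM oneM).
by rewrite -charAE Cayley_Hamilton mul0mx.
Qed.

Theorem mainTheorem9 (R : realType) (n : nat) (A B : 'M[R]_n) :
  sym_mx A -> sym_mx B -> isospectral A B -> friendly A -> friendly B ->
  forall X Y : 'M[R]_n,
    doubly_stochastic X -> frob2 (X *m A - B *m X) = 0 ->
    doubly_stochastic Y -> frob2 (Y *m A - B *m Y) = 0 ->
    X = Y.
Proof.
move=> symA symB _ [_ [_ eigA]] _ X Y [_ [Xrow _]] fX [_ [Yrow _]] fY.
have XA : X *m A = B *m X by apply/subr0_eq/frob2_eq0.
have YA : Y *m A = B *m Y by apply/subr0_eq/frob2_eq0.
apply/subr0_eq/gram_mx_eq0/(sym_commute_ones_orth_eq0 symA eigA).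
  by apply: gram_mx_commute symA symB _; rewrite mulmxBl mulmxBr XA YA.
by rewrite mulmxA -trmx_mul mulmxBl !row_sum1_mul_ones // subrr trmx0 mul0mx.
Qed.
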